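(* Let $n,d,T$ be positive integers and let $\Phi_T:\mathbb{R}^{d\times n}\to\mathbb{R}^m$ be a 1-WL geometric model (as defined in the context) in which all the functions $\phi_t,\psi_t$ ($t=0,\dots,T-1$) and $\mathrm{ReadOut}$ are upper Lipschitz. Then $\Phi_T$ is Lipschitz with respect to $d_{\mathcal{D}}$: there exists $L>0$ such that $\|\Phi_T({X})-\Phi_T({Y})\|_2\leq L\, d_{\mathcal{D}}({X},{Y})$ for all ${X},{Y}\in\mathbb{R}^{d\times n}$.
   Context: A point set is ${X}\in\mathbb{R}^{d\times n}$ with columns $x_1,\dots,x_n\in\mathbb{R}^d$. A 1-WL geometric model with $T$ iterations is defined as follows: set $c_i^0=0$ for all $i\in[n]$, and for $t=0,\dots,T-1$, $$c_i^{t+1}=\phi_t\Big(c_i^t,\ \psi_t\big(\{\!\{(c_i^t,c_j^t,\|x_i-x_j\|_2)\mid j\in[n]\}\!\}\big)\Big),$$ and finally $\Phi_T({X})=\mathrm{ReadOut}(\{\!\{c_1^T,\dots,c_n^T\}\!\})$. Here $\phi_t$ are functions between Euclidean spaces, and $\psi_t$ and $\mathrm{ReadOut}$ are multiset functions, i.e. functions of a matrix whose columns are the multiset elements that are invariant to permuting these columns; Lipschitzness of a multiset function means Lipschitzness of this matrix function in the standard Euclidean sense. The Hard-Gromov-Wasserstein distance is $$d_{\mathcal{D}}({X},{Y})=\min_{\pi\in S_n}\sum_{i,j=1}^n\big|\,\|x_i-x_j\|_2-\|y_{\pi(i)}-y_{\pi(j)}\|_2\,\big|.$$ *)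

From HB Require Import structures.
From mathcomp Require Import all_boot all_order all_algebra all_fingroup.
From mathcomp Require Import reals.
Set Implicit Arguments. Unset Strict Implicit. Unset Printing Implicit Defensive.
Import Order.TTheory GRing.Theory Num.Theory.
Local Open Scope ring_scope.

Definition mnorm (R : realType) (p q : nat) (A : 'M[R]_(p, q)) : R :=
  Num.sqrt (\sum_(i < p) \sum_(j < q) A i j ^+ 2).

Definition lipschitz (R : realType) (p1 q1 p2 q2 : nat)
  (f : 'M[R]_(p1, q1) -> 'M[R]_(p2, q2)) : Prop :=
  exists L : R, forall x y, mnorm (f x - f y) <= L * mnorm (x - y).

(* multiset function: a function of a matrix whose columns are the multiset
   elements, invariant under permutation of the columns *)
Definition multiset_fun (R : realType) (k n p : nat)
  (f : 'M[R]_(k, n) -> 'cV[R]_p) : Prop :=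
  forall (s : 'S_n) (M : 'M[R]_(k, n)), f (col_perm s M) = f M.

Definition pdist (R : realType) (d n : nat) (X : 'M[R]_(d, n)) (i j : 'I_n) : R :=
  mnorm (col i X - col j X).

Definition hgw_cost (R : realType) (d n : nat) (X Y : 'M[R]_(d, n)) (s : 'S_n) : R :=
  \sum_(i < n) \sum_(j < n) `|pdist X i j - pdist Y (s i) (s j)|.

(* Hard-Gromov-Wasserstein distance: minimum over all permutations
   (the default value of the min is the cost of the identity, which is itself
   one of the minimized terms, so this is exactly the minimum) *)
Definition hgw (R : realType) (d n : nat) (X Y : 'M[R]_(d, n)) : R :=
  \big[Num.min/hgw_cost X Y 1%g]_(s : 'S_n) hgw_cost X Y s.

Section WL.
Variables (R : realType) (d n : nat) (a b : nat -> nat).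
(* a t = dimension of colours c_i^t, b t = output dimension of psi_t *)
Variable phi : forall t, 'cV[R]_(a t + b t) -> 'cV[R]_(a t.+1).
(* phi_t(c, h) is phi t applied to the concatenation (c; h) *)
Variable psi : forall t, 'M[R]_(a t + a t + 1, n) -> 'cV[R]_(b t).
(* psi_t applied to the matrix whose j-th column is (c_i^t; c_j^t; ||x_i-x_j||) *)
Variable X : 'M[R]_(d, n).

Definition wl_agg t (C : 'M[R]_(a t, n)) (i : 'I_n) : 'M[R]_(a t + a t + 1, n) :=
  \matrix_(k, j) (col_mx (col_mx (col i C) (col j C)) (pdist X i j)%:M) k 0.

Definition wl_step t (C : 'M[R]_(a t, n)) : 'M[R]_(a t.+1, n) :=
  \matrix_(k, i) (phi (col_mx (col i C) (psi (wl_agg C i)))) k 0.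

(* column i of wl_colors t is c_i^t; c_i^0 = 0 *)
Fixpoint wl_colors (t : nat) : 'M[R]_(a t, n) :=
  match t as t0 return 'M[R]_(a t0, n) with
  | 0 => 0
  | t'.+1 => wl_step (wl_colors t')
  end.
End WL.

Definition wl_model (R : realType) (d n T m : nat) (a b : nat -> nat)
  (phi : forall t, 'cV[R]_(a t + b t) -> 'cV[R]_(a t.+1))
  (psi : forall t, 'M[R]_(a t + a t + 1, n) -> 'cV[R]_(b t))
  (readout : 'M[R]_(a T, n) -> 'cV[R]_m) (X : 'M[R]_(d, n)) : 'cV[R]_m :=
  readout (wl_colors phi psi X T).

From HB Require Import structures.
From mathcomp Require Import all_boot all_order all_algebra all_fingroup.
From mathcomp Require Import reals.
From mathcomp Require Import lra.
Import Order.TTheory GRing.Theory Num.Theory.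
Set Implicit Arguments. Unset Strict Implicit. Unset Printing Implicit Defensive.
Local Open Scope ring_scope.

(* Work with the entrywise l1 norm, which is equivalent to the Frobenius norm
   and additive over stacked blocks.  One round of message passing feeds
   [psi_t] columns that differ only in two colour columns and one distance, so
   by induction on [t] the colour matrices satisfy
   |C^t(X) - C^t(Y)|_1 <= M_t * sum_(i,j) | |x_i - x_j| - |y_i - y_j| |.
   Every round is equivariant under relabelling the points, and the readout is
   a multiset function, so the model does not see the relabelling of Y by the
   permutation achieving d_D; the bound for the relabelled Y is the theorem. *)

Lemma sum_sqr_le_sqr_sum (R : realDomainType) (I : Type) (r : seq I) (F : I -> R) :
  (forall i, 0 <= F i) -> \sum_(i <- r) F i ^+ 2 <= (\sum_(i <- r) F i) ^+ 2.
Proof.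
move=> F_ge0; elim: r => [|x r IHr]; first by rewrite !big_nil expr0n.
rewrite !big_cons.
have := F_ge0 x; have : 0 <= \sum_(i <- r) F i by exact: sumr_ge0.
nra.
Qed.

Lemma ler_sum_term (R : numDomainType) (I : finType) (F : I -> R) j :
  (forall i, 0 <= F i) -> F j <= \sum_i F i.
Proof. by move=> F_ge0; rewrite (bigD1 j) //= lerDl sumr_ge0. Qed.

Lemma col_mxB (V : zmodType) p1 p2 q (A A' : 'M[V]_(p1, q)) (B B' : 'M[V]_(p2, q)) :
  col_mx A B - col_mx A' B' = col_mx (A - A') (B - B').
Proof. by rewrite opp_col_mx add_col_mx. Qed.

Lemma col_col_perm (T : Type) p q (s : 'S_q) (A : 'M[T]_(p, q)) i :
  col i (col_perm s A) = col (s i) A.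
Proof. by apply/matrixP => k l; rewrite !mxE. Qed.

Section EntrywiseL1Norm.
Variable R : realType.

Definition l1norm p q (A : 'M[R]_(p, q)) : R := \sum_i \sum_j `|A i j|.

Lemma l1norm_ge0 p q (A : 'M[R]_(p, q)) : 0 <= l1norm A.
Proof. by apply: sumr_ge0 => i _; apply: sumr_ge0. Qed.

Lemma mnorm_le_l1norm p q (A : 'M[R]_(p, q)) : mnorm A <= l1norm A.
Proof.
rewrite /mnorm /l1norm !pair_bigA /= -[X in _ <= X]ger0_norm ?sumr_ge0 //.
rewrite -sqrtr_sqr ler_wsqrtr // (le_trans _ (sum_sqr_le_sqr_sum _ _)) //.
by apply: ler_sum => ij _; rewrite real_normK ?num_real.
Qed.

Lemma normr_mxentry_le_mnorm p q (A : 'M[R]_(p, q)) i j : `|A i j| <= mnorm A.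
Proof.
rewrite -sqrtr_sqr ler_wsqrtr // /mnorm pair_bigA /=.
by apply: (ler_sum_term (F := fun ij : 'I_p * 'I_q => A ij.1 ij.2 ^+ 2) (i, j))
  => ij; apply: sqr_ge0.
Qed.

Lemma l1norm_le_mnorm p q (A : 'M[R]_(p, q)) : l1norm A <= (p * q)%:R * mnorm A.
Proof.
rewrite /l1norm pair_bigA /=.
apply: le_trans (_ : \sum_(ij : 'I_p * 'I_q) mnorm A <= _).
  by apply: ler_sum => ij _; apply: normr_mxentry_le_mnorm.
by rewrite sumr_const card_prod !card_ord mulr_natl.
Qed.

Lemma lipschitz_l1norm p1 q1 p2 q2 (f : 'M[R]_(p1, q1) -> 'M[R]_(p2, q2)) :
  lipschitz f ->
  exists K, 0 <= K /\ forall x y, l1norm (f x - f y) <= K * l1norm (x - y).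
Proof.
case=> L f_lip; exists ((p2 * q2)%:R * `|L|); split; first exact: mulr_ge0.
move=> x y; apply: le_trans (l1norm_le_mnorm _) _; rewrite -mulrA ler_wpM2l //.
apply: le_trans (f_lip x y) _.
apply: le_trans (ler_wpM2r (sqrtr_ge0 _) (ler_norm L)) _.
by rewrite ler_wpM2l // mnorm_le_l1norm.
Qed.

Lemma l1norm_col_mx p1 p2 q (A : 'M[R]_(p1, q)) (B : 'M[R]_(p2, q)) :
  l1norm (col_mx A B) = l1norm A + l1norm B.
Proof.
rewrite /l1norm big_split_ord /=.
by congr (_ + _); apply: eq_bigr => i _; apply: eq_bigr => j _;
  rewrite ?col_mxEu ?col_mxEd.
Qed.

Lemma l1norm_scalar_mx (x : R) : l1norm (x%:M : 'M_1) = `|x|.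
Proof. by rewrite /l1norm !big_ord1 mxE. Qed.

Lemma l1norm_sum_col p q (A : 'M[R]_(p, q)) : l1norm A = \sum_j l1norm (col j A).
Proof.
rewrite /l1norm exchange_big; apply: eq_bigr => j _.
by apply: eq_bigr => i _; rewrite big_ord1 mxE.
Qed.

Lemma l1norm_col_le p q (A : 'M[R]_(p, q)) j : l1norm (col j A) <= l1norm A.
Proof.
rewrite [leRHS]l1norm_sum_col.
by apply: (ler_sum_term (F := fun k => l1norm (col k A))) => k; apply: l1norm_ge0.
Qed.

End EntrywiseL1Norm.

Section WLModel.
Variables (R : realType) (d n : nat) (a b : nat -> nat).
Variables (phi : forall t, 'cV[R]_(a t + b t) -> 'cV[R]_(a t.+1))
  (psi : forall t, 'M[R]_(a t + a t + 1, n) -> 'cV[R]_(b t)).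
Arguments phi : clear implicits.
Arguments psi : clear implicits.

Lemma wl_colors0 (X : 'M[R]_(d, n)) : wl_colors phi psi X 0 = 0.
Proof. by []. Qed.

Lemma wl_colorsS (X : 'M[R]_(d, n)) t :
  wl_colors phi psi X t.+1 = wl_step phi psi X (wl_colors phi psi X t).
Proof. by []. Qed.

Lemma pdist_col_perm (s : 'S_n) (Y : 'M[R]_(d, n)) i j :
  pdist (col_perm s Y) i j = pdist Y (s i) (s j).
Proof. by rewrite /pdist !col_col_perm. Qed.

Lemma wl_agg_col_perm t (s : 'S_n) (Y : 'M[R]_(d, n)) (C : 'M[R]_(a t, n)) i :
  wl_agg (col_perm s Y) (col_perm s C) i = col_perm s (wl_agg Y C (s i)).
Proof. by apply/matrixP => k j; rewrite !mxE !col_col_perm pdist_col_perm. Qed.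

Lemma wl_step_col_perm t (s : 'S_n) (Y : 'M[R]_(d, n)) (C : 'M[R]_(a t, n)) :
  multiset_fun (psi t) ->
  wl_step phi psi (col_perm s Y) (col_perm s C) =
  col_perm s (wl_step phi psi Y C).
Proof.
move=> psi_inv; apply/matrixP => k i.
by rewrite !mxE col_col_perm wl_agg_col_perm psi_inv.
Qed.

Lemma wl_colors_col_perm T (s : 'S_n) (Y : 'M[R]_(d, n)) :
  (forall t, (t < T)%N -> multiset_fun (psi t)) ->
  forall t, (t <= T)%N ->
  wl_colors phi psi (col_perm s Y) t = col_perm s (wl_colors phi psi Y t).
Proof.
move=> psi_inv; elim=> [|t IHt] ltT.
  by rewrite !wl_colors0; apply/matrixP => i j; rewrite !mxE.
rewrite !wl_colorsS (IHt (ltnW ltT)) wl_step_col_perm //; exact: psi_inv.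
Qed.

Lemma wl_model_col_perm T m (readout : 'M[R]_(a T, n) -> 'cV[R]_m)
    (s : 'S_n) (Y : 'M[R]_(d, n)) :
  (forall t, (t < T)%N -> multiset_fun (psi t)) -> multiset_fun readout ->
  wl_model phi psi readout (col_perm s Y) = wl_model phi psi readout Y.
Proof.
move=> psi_inv readout_inv.
rewrite /wl_model (wl_colors_col_perm s Y psi_inv (leqnn T)); exact: readout_inv.
Qed.

Definition pdist_gap (X Y : 'M[R]_(d, n)) : R :=
  \sum_i \sum_j `|pdist X i j - pdist Y i j|.

Lemma pdist_gap_ge0 X Y : 0 <= pdist_gap X Y.
Proof. by apply: sumr_ge0 => i _; apply: sumr_ge0. Qed.

Lemma hgw_costE (X Y : 'M[R]_(d, n)) s :
  hgw_cost X Y s = pdist_gap X (col_perm s Y).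
Proof.
by apply: eq_bigr => i _; apply: eq_bigr => j _; rewrite pdist_col_perm.
Qed.

Lemma col_wl_agg t (X : 'M[R]_(d, n)) (C : 'M[R]_(a t, n)) i j :
  col j (wl_agg X C i) = col_mx (col_mx (col i C) (col j C)) (pdist X i j)%:M.
Proof. by apply/matrixP => k l; rewrite !mxE ord1. Qed.

Lemma col_wl_step t (X : 'M[R]_(d, n)) (C : 'M[R]_(a t, n)) i :
  col i (wl_step phi psi X C) = phi t (col_mx (col i C) (psi t (wl_agg X C i))).
Proof. by apply/matrixP => k l; rewrite !mxE ord1. Qed.

Lemma wl_agg_l1_bound t (X Y : 'M[R]_(d, n)) (C C' : 'M[R]_(a t, n)) i :
  l1norm (wl_agg X C i - wl_agg Y C' i)
    <= (2 * n)%:R * l1norm (C - C') + pdist_gap X Y.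
Proof.
rewrite l1norm_sum_col.
apply: le_trans (_ : \sum_j (l1norm (C - C') *+ 2
                       + `|pdist X i j - pdist Y i j|) <= _).
  apply: ler_sum => j _.
  rewrite linearB /= !col_wl_agg !col_mxB -!linearB /= -raddfB.
  by rewrite !l1norm_col_mx l1norm_scalar_mx mulr2n lerD2r lerD ?l1norm_col_le.
rewrite big_split /= sumr_const card_ord -mulrnA mulr_natl mulnC lerD2l.
by apply: (ler_sum_term (F := fun k => \sum_j `|pdist X k j - pdist Y k j|))
  => k; apply: sumr_ge0.
Qed.


Lemma wl_step_l1_bound t :
  lipschitz (phi t) -> lipschitz (psi t) ->
  exists K, 0 <= K /\ forall (X Y : 'M[R]_(d, n)) (C C' : 'M[R]_(a t, n)),
    l1norm (wl_step phi psi X C - wl_step phi psi Y C')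
      <= K * (l1norm (C - C') + pdist_gap X Y).
Proof.
move=> /lipschitz_l1norm[Kphi [Kphi0 phi_lip]].
move=> /lipschitz_l1norm[Kpsi [Kpsi0 psi_lip]].
set Kcol := Kphi * (1 + Kpsi * (2 * n + 1)%:R).
have Kcol0 : 0 <= Kcol by rewrite mulr_ge0 ?addr_ge0 ?mulr_ge0.
exists (Kcol *+ n); split; first exact: mulrn_wge0.
move=> X Y C C'; have G0 := pdist_gap_ge0 X Y; have E0 := l1norm_ge0 (C - C').
set E := l1norm (C - C') in E0 *; set G := pdist_gap X Y in G0 *.
have col_bound i :
    l1norm (col i (wl_step phi psi X C - wl_step phi psi Y C')) <= Kcol * (E + G).
  rewrite linearB /= !col_wl_step; apply: le_trans (phi_lip _ _) _.
  rewrite -mulrA ler_wpM2l // col_mxB -linearB l1norm_col_mx.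
  apply: le_trans (lerD (l1norm_col_le _ i) (psi_lip _ _)) _.
  have := wl_agg_l1_bound X Y C C' i; rewrite -/E -/G natrD natrM => agg_bound.
  have n0 : 0 <= n%:R :> R by [].
  have := ler_wpM2l Kpsi0 agg_bound.
  have := mulr_ge0 (mulr_ge0 Kpsi0 n0) G0; have := mulr_ge0 Kpsi0 E0; nra.
rewrite l1norm_sum_col; apply: le_trans (ler_sum _ (fun i _ => col_bound i)) _.
by rewrite sumr_const card_ord mulrnAl.
Qed.

Lemma wl_colors_l1_bound T :
  (forall t, (t < T)%N -> lipschitz (phi t)) ->
  (forall t, (t < T)%N -> lipschitz (psi t)) ->
  forall t, (t <= T)%N -> exists M, 0 <= M /\ forall X Y : 'M[R]_(d, n),
    l1norm (wl_colors phi psi X t - wl_colors phi psi Y t) <= M * pdist_gap X Y.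
Proof.
move=> phi_lip psi_lip; elim=> [|t IHt] ltT.
  exists 0; split=> // X Y; rewrite !wl_colors0 subrr mul0r.
  by rewrite /l1norm big1 // => i _; rewrite big1 // => j _; rewrite mxE normr0.
have [M [M0 colors_bound]] := IHt (ltnW ltT).
have [K [K0 step_bound]] := wl_step_l1_bound (phi_lip t ltT) (psi_lip t ltT).
exists (K * (M + 1)); split; first by rewrite mulr_ge0 ?addr_ge0.
move=> X Y; rewrite !wl_colorsS; apply: le_trans (step_bound _ _ _ _) _.
by rewrite -mulrA ler_wpM2l // mulrDl mul1r lerD2r.
Qed.

Lemma wl_model_gap_bound T m (readout : 'M[R]_(a T, n) -> 'cV[R]_m) :
  (forall t, (t < T)%N -> lipschitz (phi t)) ->
  (forall t, (t < T)%N -> lipschitz (psi t)) ->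
  lipschitz readout ->
  exists K, 0 <= K /\ forall X Y : 'M[R]_(d, n),
    mnorm (wl_model phi psi readout X - wl_model phi psi readout Y)
      <= K * pdist_gap X Y.
Proof.
move=> phi_lip psi_lip /lipschitz_l1norm[Kr [Kr0 readout_lip]].
have [M [M0 colors_bound]] := wl_colors_l1_bound phi_lip psi_lip (leqnn T).
exists (Kr * M); split=> [|X Y]; first exact: mulr_ge0.
apply: le_trans (mnorm_le_l1norm _) _; apply: le_trans (readout_lip _ _) _.
by rewrite -mulrA ler_wpM2l.
Qed.

End WLModel.

Unset Implicit Arguments.

Theorem theorem3 (R : realType) (n d T m : nat) (a b : nat -> nat)
  (phi : forall t, 'cV[R]_(a t + b t) -> 'cV[R]_(a t.+1))
  (psi : forall t, 'M[R]_(a t + a t + 1, n) -> 'cV[R]_(b t))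
  (readout : 'M[R]_(a T, n) -> 'cV[R]_m) :
  (0 < n)%N -> (0 < d)%N -> (0 < T)%N ->
  (forall t, (t < T)%N -> multiset_fun (psi t)) ->
  multiset_fun readout ->
  (forall t, (t < T)%N -> lipschitz (phi t)) ->
  (forall t, (t < T)%N -> lipschitz (psi t)) ->
  lipschitz readout ->
  exists L : R, 0 < L /\
    forall X Y : 'M[R]_(d, n),
      mnorm (wl_model phi psi readout X - wl_model phi psi readout Y)
        <= L * hgw X Y.
Proof.
move=> _ _ _ psi_inv readout_inv phi_lip psi_lip readout_lip.
have [K [K0 model_bound]] := wl_model_gap_bound d phi_lip psi_lip readout_lip.
have L_gt0 : 0 < K + 1 by rewrite ltr_wpDl.
exists (K + 1); split=> // X Y.
have cost_bound s :
    mnorm (wl_model phi psi readout X - wl_model phi psi readout Y)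
      <= (K + 1) * hgw_cost X Y s.
  rewrite hgw_costE -(wl_model_col_perm phi s Y psi_inv readout_inv).
  apply: le_trans (model_bound _ _) _.
  by rewrite ler_wpM2r ?pdist_gap_ge0 ?lerDl.
rewrite mulrC -ler_pdivrMr //; apply/bigmin_geP.
by split=> [|s _]; rewrite ler_pdivrMr // mulrC cost_bound.
Qed.
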